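(* For any rational number $t$ with $1/2 < t \le 1$, there exist no minimally $t$-tough chordal graphs.
   Context: All graphs are finite, simple and undirected. A graph is chordal if it contains no induced cycle of length at least $4$. $\omega(H)$ denotes the number of components of $H$. A cutset of $G$ is a vertex set $S$ with $G-S$ disconnected. For positive real $t$, $G$ is $t$-tough if $\omega(G-S)\le |S|/t$ for every cutset $S$; the toughness $\tau(G)$ is the largest such $t$, with $\tau(K_n)=\infty$ for all $n\ge1$. $G$ is minimally $t$-tough if $\tau(G)=t$ and $\tau(G-e)<t$ for every edge $e$ of $G$. *)

From HB Require Import structures.
From mathcomp Require Import all_boot all_order all_algebra.
Set Implicit Arguments. Unset Strict Implicit. Unset Printing Implicit Defensive.
Import Order.TTheory GRing.Theory Num.Theory.
Local Open Scope ring_scope.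

(* A finite simple graph: vertex type T : finType, adjacency e : rel T,
   assumed symmetric and irreflexive in the theorem. *)

Definition del_verts (T : finType) (e : rel T) (S : {set T}) : rel T :=
  [rel x y | [&& e x y, x \notin S & y \notin S]].

Definition omega (T : finType) (e : rel T) (S : {set T}) : nat :=
  n_comp (del_verts e S) (~: S).

Definition cutset (T : finType) (e : rel T) (S : {set T}) : bool :=
  (1 < omega e S)%N.

(* G is t-tough: omega(G - S) <= |S| / t for every cutset S
   (written multiplicatively: t * omega(G-S) <= |S|). *)
Definition tough (T : finType) (e : rel T) (t : rat) : Prop :=
  forall S : {set T}, cutset e S -> t * (omega e S)%:R <= (#|S|)%:R.

(* tau(G) = t : t is the largest value for which G is t-tough.
   (Complete graphs are t-tough for every t, so tau(K_n) = infinity is never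
   equal to a rational t.) *)
Definition toughness_is (T : finType) (e : rel T) (t : rat) : Prop :=
  tough e t /\ forall t' : rat, t < t' -> ~ tough e t'.

Definition del_edge (T : finType) (e : rel T) (x y : T) : rel T :=
  [rel u v | e u v && ~~ (((u == x) && (v == y)) || ((u == y) && (v == x)))].

Definition minimally_tough (T : finType) (e : rel T) (t : rat) : Prop :=
  toughness_is e t /\
  forall x y : T, e x y -> exists t0 : rat, t0 < t /\ toughness_is (del_edge e x y) t0.

Definition induced_cycle (T : finType) (e : rel T) (n : nat) (f : 'I_n -> T) : Prop :=
  (3 <= n)%N /\ injective f /\
  forall i j : 'I_n,
    e (f i) (f j) = (val j == (val i).+1 %% n)%N || (val i == (val j).+1 %% n)%N.

Definition chordal (T : finType) (e : rel T) : Prop :=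
  forall (n : nat) (f : 'I_n -> T), (4 <= n)%N -> ~ induced_cycle e f.

From mathcomp Require Import all_boot all_order all_algebra.
From mathcomp Require Import zify lra.
Import Order.TTheory GRing.Theory Num.Theory.
Set Implicit Arguments. Unset Strict Implicit. Unset Printing Implicit Defensive.

(* A t-tough graph with t > 1/2 has no cut vertex, and a minimally t-tough graph is not
   complete.  By a variant of Dirac's lemma a chordal non-complete graph has a simplicial
   vertex u with a non-neighbour, so u has two neighbours x, y, and xy is an edge.  By
   minimality G - xy has a cutset S with |S| < t omega(G - xy - S).  As G is t-tough, x
   and y lie in different components of G - xy - S, so u and every other neighbour of u,
   being common neighbours of x and y, lie in S.  Putting u back merges only the
   components of x and y, so omega(G - (S - u)) >= omega(G - xy - S) - 1, which
   contradicts the t-toughness of G (as t <= 1) when omega(G - xy - S) >= 3.  Otherwise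
   |S| < 2t <= 2 forces S = {u} and N(u) = {x, y}, and then x or y is a cut vertex. *)

Section Components.

Variable T : finType.
Implicit Types (f g : rel T) (S A : {set T}) (p q z : T).

Lemma connect_ind f (P : T -> Prop) p :
  P p -> (forall z w, P z -> f z w -> P w) -> forall q, connect f p q -> P q.
Proof.
move=> Pp step q /connectP [s fs ->]; elim: s p Pp fs => //= z s IH p Pp /andP [fpz fs].
exact: IH (step _ _ Pp fpz) fs.
Qed.

Lemma connect_from_isolated f p q : (forall w, ~~ f p w) -> connect f p q -> q = p.
Proof.
move=> isolated; apply: (connect_ind (P := eq^~ p)) => // z w -> fpw.
by move: (isolated w); rewrite fpw.
Qed.

Lemma del_verts_sym g S : symmetric g -> symmetric (del_verts g S).
Proof.
by move=> gs p q; rewrite /del_verts /= gs; case: (p \in S); case: (q \in S); rewrite ?andbF.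
Qed.

Lemma del_edge_sym g x y : symmetric g -> symmetric (del_edge g x y).
Proof.
by move=> gs p q; rewrite /del_edge /= gs orbC (andbC (q == x)) (andbC (q == y)).
Qed.

Lemma del_verts_notin g S p q : del_verts g S p q -> q \in ~: S.
Proof. by rewrite inE => /and3P []. Qed.

Lemma connect_del_verts_notin g S p q :
  p \in ~: S -> connect (del_verts g S) p q -> q \in ~: S.
Proof.
by move=> pS; apply: (connect_ind (P := fun z => z \in ~: S)) => // z w _ /del_verts_notin.
Qed.

Lemma connect_del_verts_in g S p q :
  p \in S -> connect (del_verts g S) p q -> q = p.
Proof. by move=> pS; apply: connect_from_isolated => w; rewrite /del_verts /= pS andbF. Qed.

Lemma n_comp_roots f S : n_comp f S = #|[set r | roots f r & r \in S]|.
Proof. by apply: eq_card => r; rewrite !inE. Qed.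

Lemma roots_connect_eq f r r' :
  connect_sym f -> roots f r -> roots f r' -> connect f r r' -> r = r'.
Proof. by move=> fs /eqP rr /eqP rr' /(fingraph.rootP fs); rewrite rr rr'. Qed.

Lemma leq_card_n_comp g S A : symmetric g -> A \subset ~: S ->
  {in A &, forall p q, connect (del_verts g S) p q -> p = q} ->
  #|A| <= omega g S.
Proof.
move=> gs AS Ainj; set f := del_verts g S; have fs := sym_connect_sym (del_verts_sym S gs).
rewrite /omega n_comp_roots -(card_in_imset (f := fingraph.root f)); last first.
  by move=> p q pA qA /(fingraph.rootP fs); apply: Ainj.
apply/subset_leq_card/subsetP => _ /imsetP [p pA ->].
rewrite inE (roots_root fs) /=.
exact: connect_del_verts_notin (subsetP AS p pA) (connect_root f p).
Qed.

Lemma separated_cutset g S p q : symmetric g -> p \in ~: S -> q \in ~: S ->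
  ~~ connect (del_verts g S) p q -> cutset g S.
Proof.
move=> gs pS qS npq; have pq : p != q by apply: contraNneq npq => ->.
have := @leq_card_n_comp g S [set p; q] gs; rewrite cards2 pq; apply.
  by rewrite subUset !sub1set pS qS.
have cs := sym_connect_sym (del_verts_sym S gs).
by move=> z w; rewrite !inE => /orP [] /eqP -> /orP [] /eqP -> //; rewrite ?(cs q) (negbTE npq).
Qed.

End Components.

Section ChordlessWalks.

Variables (T : finType) (e : rel T).
Hypotheses (sym_e : symmetric e) (irr_e : irreflexive e).

Definition walk_through (D : pred T) (x y : T) (q : seq T) : Prop :=
  [/\ 2 <= size q, nth x q 0 = x, nth x q (size q).-1 = y,
      forall k, k.+1 < size q -> e (nth x q k) (nth x q k.+1)
    & forall k, 0 < k < (size q).-1 -> D (nth x q k)].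

Lemma path_walk_through (D : pred T) x s y :
  path e x (rcons s y) -> all D s -> walk_through D x y (x :: rcons s y).
Proof.
move=> /(pathP x) exy Ds; split; rewrite /= ?size_rcons /= ?nth_rcons ?ltnn ?eqxx //.
  by move=> k; rewrite ltnS -(size_rcons s y); apply: exy.
move=> [|k] //= ks.
by rewrite nth_rcons -ltnS ks; apply: (allP Ds); rewrite mem_nth.
Qed.

Definition chordless (x : T) (q : seq T) : Prop :=
  forall i j, i.+1 < j < size q -> ~~ e (nth x q i) (nth x q j).

Lemma walk_through_chordless D x y q :
  walk_through D x y q -> exists2 q', walk_through D x y q' & chordless x q'.
Proof.
have [n] := ubnP (size q); elim: n q => // n IH q /ltnSE szq.
move=> [sz2 q0 ql wq qD]; set N := size q in szq sz2 ql wq qD.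
case: (boolP [exists i : 'I_N, exists j : 'I_N, (i.+1 < j) && e (nth x q i) (nth x q j)]);
  last first.
  rewrite negb_exists => /forallP nochord; exists q; first by split.
  move=> i j /andP [ij jN]; have iN : i < N by lia.
  by have := nochord (Ordinal iN); rewrite negb_exists => /forallP /(_ (Ordinal jN)); rewrite /= ij.
move=> /existsP [[i iN] /existsP [[j jN] /andP /= [ij eij]]].
(* Shortcut the chord by dropping the d vertices strictly between i and j. *)
pose d := j - i.+1.
pose q' := mkseq (fun k => if k <= i then nth x q k else nth x q (k + d)) (N - d).
have szq' : size q' = N - d by rewrite size_mkseq.
apply: (IH q'); first by rewrite szq' /d; lia.
split; rewrite ?szq'.
- by rewrite /d; lia.
- by rewrite nth_mkseq /d //; lia.
- rewrite nth_mkseq; last by rewrite /d; lia.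
  have -> : ((N - d).-1 <= i) = false by apply/negbTE; rewrite -ltnNge /d; lia.
  by rewrite (_ : _ + d = N.-1) // /d; lia.
- move=> k kl; rewrite !nth_mkseq; try (rewrite /d; lia).
  case: (leqP k.+1 i) => h1; first by rewrite (ltnW h1) ?h1; apply: wq; lia.
  case: (leqP k i) => h2; last by rewrite addSn; apply: wq; rewrite /d; lia.
  have -> : k = i by lia.
  by rewrite (_ : i.+1 + d = j) // /d; lia.
- move=> k /andP [k0 kl]; rewrite nth_mkseq; last by rewrite /d; lia.
  by case: (leqP k i) => h; apply: qD; rewrite /d; lia.
Qed.

Lemma chordless_walk_nth_inj D x y q :
  walk_through D x y q -> chordless x q -> x != y -> ~~ e x y ->
  2 < size q /\ forall k l, k < l < size q -> nth x q k != nth x q l.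
Proof.
move=> [sz2 q0 ql wq _] cl xy nexy; set N := size q in sz2 ql wq cl *.
have N3 : 2 < N.
  case: (ltngtP N 2) => // [|N2]; first by lia.
  by have := wq 0 ltac:(lia); rewrite q0 (_ : 1 = N.-1) ?ql ?(negbTE nexy) // N2.
split=> // k l /andP [kl lN]; apply/eqP => E.
have [l1 | l1] := eqVneq l k.+1; first by subst l; have := wq k; rewrite -E irr_e; lia.
case: l E kl lN l1 => // m E km mN mk.
have [km' | mk1] : k.+1 < m \/ m = k.+1 by lia.
  by have := cl k m; rewrite E sym_e wq; lia.
subst m; case: k E {km mk} mN => [|k] E mN.
  have [N4 | N3'] : 3 < N \/ N = 3 by lia.
    by have := cl 0 3; rewrite E wq //; lia.
  by move: xy; rewrite -q0 -ql N3' E eqxx.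
by have := cl k k.+3; rewrite -E wq //; lia.
Qed.

Lemma apex_chordless_induced_cycle D a x y q :
  walk_through D x y q -> chordless x q ->
  (forall k l, k < l < size q -> nth x q k != nth x q l) ->
  (forall k, k < size q -> nth x q k != a) ->
  (forall k, k < size q -> e a (nth x q k) = (k == 0) || (k == (size q).-1)) ->
  induced_cycle e (fun i : 'I_(size q).+1 => if val i is k.+1 then nth x q k else a).
Proof.
move=> [sz2 _ _ wq _] cl nq na ea; set N := size q in sz2 wq cl nq na ea *.
pose g k := if k is k'.+1 then nth x q k' else a.
have mod_succ2 m : m.+2 <= N.+1 ->
    m.+2 < N.+1 /\ m.+2 %% N.+1 = m.+2 \/ m.+2 = N.+1 /\ m.+2 %% N.+1 = 0.
  move=> mN; case: (ltngtP m.+2 N.+1) => [h|h|->];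
    [by left; rewrite modn_small | lia | by right; rewrite modnn].
have adj_le i j : i <= j -> j < N.+1 ->
    e (g i) (g j) = (j == i.+1 %% N.+1) || (i == j.+1 %% N.+1).
  case: i => [|k]; case: j => [|l] ij jN /=; first by rewrite irr_e (@modn_small 1); lia.
  - by rewrite ea ?(@modn_small 1); [have [[? ->]|[? ->]] := mod_succ2 l jN | ..]; lia.
  - by lia.
  have [lk | kl] : l = k \/ k < l by lia.
    by subst l; rewrite irr_e; have [[? ->]|[? ->]] := mod_succ2 k jN; lia.
  have -> : e (nth x q k) (nth x q l) = (l == k.+1).
    by have [-> | lk] := eqVneq l k.+1; [rewrite wq | apply/negbTE/cl]; lia.
  by have [[? ->]|[? ->]] := mod_succ2 k (leq_ltn_trans ij jN);
    have [[? ->]|[? ->]] := mod_succ2 l jN; lia.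
split; first by lia.
split.
  move=> [[|i] iN] [[|j] jN] /= E; apply/val_inj => //=.
  - by move: (na j); rewrite -E eqxx; lia.
  - by move: (na i); rewrite E eqxx; lia.
  case: (ltngtP i j) => [ij|ij|->] //; first by move: (nq i j); rewrite E eqxx; lia.
  by move: (nq j i); rewrite E eqxx; lia.
move=> [i iN] [j jN] /=; case: (leqP i j) => [ij|ji]; first exact: (adj_le i j).
by rewrite sym_e orbC adj_le // ltnW.
Qed.

Lemma chordal_no_apex_walk (D : pred T) a x y q :
  chordal e -> e a x -> e a y -> x != y -> ~~ e x y ->
  (forall z, D z -> (z != a) && ~~ e a z) -> walk_through D x y q -> False.
Proof.
move=> chord eax eay xy nexy Da /walk_through_chordless [{}q wq cl].
have [N3 nq] := chordless_walk_nth_inj wq cl xy nexy.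
case: (wq) => _ q0 ql _ qD; set N := size q in N3 nq q0 ql qD.
have inner_or_end k : k < N -> 0 < k < N.-1 \/ k = 0 \/ k = N.-1 by lia.
have na k : k < N -> nth x q k != a.
  move=> /inner_or_end [/qD/Da/andP [] // | [->|->]]; rewrite ?q0 ?ql eq_sym.
    by apply: contraTneq eax => ->; rewrite irr_e.
  by apply: contraTneq eay => ->; rewrite irr_e.
have ea k : k < N -> e a (nth x q k) = (k == 0) || (k == N.-1).
  move=> /inner_or_end [kin | [->|->]]; rewrite ?q0 ?ql ?eax ?eay ?eqxx ?orbT //.
  by have /andP [_ /negbTE ->] := Da _ (qD k kin); lia.
apply: (chord N.+1 _ _ (apex_chordless_induced_cycle wq cl nq na ea)); lia.
Qed.

End ChordlessWalks.

Section SimplicialVertex.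

Variables (T : finType) (e : rel T).
Hypotheses (sym_e : symmetric e) (irr_e : irreflexive e) (chord : chordal e).

Definition simplicial_in (W : {set T}) (s : T) : Prop :=
  {in W &, forall p q, e s p -> e s q -> p != q -> e p q}.

Definition far (W : {set T}) (a : T) : {set T} := [set z in W | (z != a) && ~~ e a z].

Definition far_rel (W : {set T}) (a : T) : rel T :=
  [rel p q | [&& e p q, p \in far W a & q \in far W a]].

Definition far_comp (W : {set T}) (a x0 : T) : {set T} := [set z | connect (far_rel W a) x0 z].

Definition comp_border (W : {set T}) (a x0 : T) : {set T} :=
  [set m in W | (m \notin far_comp W a x0) && [exists d in far_comp W a x0, e m d]].

Section FarComponent.

Variables (W : {set T}) (a x0 : T).
Hypothesis x0_far : x0 \in far W a.

Local Notation R := (far W a).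
Local Notation D := (far_comp W a x0).
Local Notation M := (comp_border W a x0).
Local Notation eR := (far_rel W a).

Lemma far_comp_far z : z \in D -> z \in R.
Proof. by rewrite inE; apply: (connect_ind (P := fun z => z \in R)) => // u v _ /and3P []. Qed.

Lemma far_comp_closed z w : z \in D -> w \in R -> e z w -> w \in D.
Proof.
move=> zD wR ezw; have zR := far_comp_far zD; move: zD; rewrite !inE => x0z.
by apply: connect_trans x0z (connect1 _); rewrite /far_rel /= ezw wR zR.
Qed.

Lemma far_comp_connect d1 d2 : d1 \in D -> d2 \in D -> connect eR d1 d2.
Proof.
have eRs : connect_sym eR.
  apply: sym_connect_sym => u v; rewrite /far_rel /= sym_e.
  by case: (u \in R); case: (v \in R); rewrite ?andbF.
by rewrite !inE => x0d1; apply: connect_trans; rewrite eRs.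
Qed.

Lemma comp_border_adj m : m \in M -> e a m.
Proof.
rewrite inE => /and3P [mW mD /existsP [d /andP [dD emd]]].
have := far_comp_far dD; rewrite inE => /and3P [_ da nad].
case: (boolP (m \in R)) => mR; first by move: mD; rewrite (far_comp_closed dD mR) // sym_e.
move: mR; rewrite inE mW /= negb_and !negbK => /orP [/eqP ma | //].
by move: nad; rewrite -ma emd.
Qed.

Lemma comp_border_clique m1 m2 : m1 \in M -> m2 \in M -> m1 != m2 -> e m1 m2.
Proof.
move=> m1M m2M m12; apply/negPn/negP => nem.
have [am1 am2] := (comp_border_adj m1M, comp_border_adj m2M).
move: m1M m2M; rewrite !inE => /and3P [_ _ /existsP [d1 /andP [d1D em1]]].
move=> /and3P [_ _ /existsP [d2 /andP [d2D em2]]].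
have /connectP [p pth d2_last] := far_comp_connect d1D d2D.
have pR : all (fun z => z \in R) (d1 :: p).
  apply/allP => z /(path_connect pth) d1z; apply: far_comp_far.
  by move: d1D; rewrite !inE => /connect_trans; apply.
apply: (chordal_no_apex_walk sym_e irr_e (D := fun z => z \in R) chord am1 am2 m12 nem).
  by move=> z; rewrite inE => /and3P [_ -> ->].
apply: path_walk_through pR.
rewrite rcons_path /= em1 -d2_last sym_e em2 andbT.
by apply: sub_path pth => u v /andP [].
Qed.

Lemma far_comp_nbr d p : d \in D -> p \in W -> e d p -> p \in D :|: M.
Proof.
move=> dD pW edp; rewrite inE; case: (boolP (p \in R)) => pR.
  by rewrite (far_comp_closed dD pR edp).
have := far_comp_far dD; rewrite inE => /and3P [_ da nad].
move: pR; rewrite inE pW /= negb_and !negbK => /orP [/eqP pa | eap].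
  by move: nad; rewrite -pa sym_e edp.
have pD : p \notin D by apply/negP => /far_comp_far; rewrite inE eap !andbF.
by apply/orP; right; rewrite inE pW pD /=; apply/existsP; exists d; rewrite dD sym_e.
Qed.

Lemma far_comp_border_apex p q : p \in D :|: M -> q \in D :|: M -> p != q -> ~~ e p q ->
  exists b z, [/\ b \in D :|: M, z \in far (D :|: M) b & {in M, forall m, m != b -> e b m}].
Proof.
move=> pW qW pq npq.
have border_dom m : m \in M -> {in M, forall m', m' != m -> e m m'}.
  by move=> mM m' m'M m'm; apply: comp_border_clique; rewrite // eq_sym.
case: (boolP [exists m in M, exists z in D :|: M, (z != m) && ~~ e m z]).
  move=> /existsP [m /andP [mM /existsP [z /and3P [zW zm nmz]]]].
  exists m, z; split; [by rewrite inE mM orbT | by rewrite /far in_set zW zm | exact: border_dom].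
rewrite negb_exists => /forallP dominating.
have {}dominating m z : m \in M -> z \in D :|: M -> z != m -> e m z.
  move=> mM zW zm; apply/negPn/negP => nmz.
  by move: (dominating m); rewrite mM /= => /existsPn /(_ z); rewrite zW zm nmz.
exists p, q; split; [by [] | by rewrite /far in_set qW eq_sym pq | move=> m mM mp].
by rewrite sym_e dominating // eq_sym.
Qed.

End FarComponent.

(* Induction on |W|: D is the component of x0 in W - N[a] and M its neighbourhood in W,
   a clique by chordality.  Either D :|: M is a clique, or it contains a vertex b adjacent
   to all of M with a non-neighbour; a simplicial vertex of D :|: M away from b then lies
   in D, where all its neighbours in W already are. *)
Lemma exists_simplicial_far (W : {set T}) a x0 :
  a \in W -> x0 \in far W a -> exists2 s, s \in far W a & simplicial_in W s.
Proof.
have [n] := ubnP #|W|; elim: n W a x0 => // n IH W a x0 /ltnSE szW aW x0R.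
set D := far_comp W a x0; set M := comp_border W a x0.
have x0D : x0 \in D by rewrite inE connect0.
have lift s : s \in D -> simplicial_in (D :|: M) s ->
    exists2 s, s \in far W a & simplicial_in W s.
  move=> sD sW; exists s; first exact: far_comp_far sD.
  move=> p q pW qW esp esq pq.
  by apply: sW; rewrite ?(far_comp_nbr x0R sD pW esp) ?(far_comp_nbr x0R sD qW esq).
case: (boolP [forall p in D :|: M, forall q in D :|: M, (p != q) ==> e p q]) => [clique | ].
  apply: (lift x0 x0D) => p q pW qW _ _ pq.
  by move/forall_inP/(_ p pW)/forall_inP/(_ q qW)/implyP: clique; apply.
move=> /forall_inPn [p pW /forall_inPn [q qW]]; rewrite negb_imply => /andP [pq npq].
have [b [z [bW zb b_dom]]] := far_comp_border_apex x0R pW qW pq npq.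
have W'W : #|D :|: M| < #|W|.
  apply/proper_card/properP; split.
    by apply/subsetP => w; rewrite inE => /orP [/(far_comp_far x0R) | ]; rewrite inE => /andP [].
  exists a => //; rewrite inE negb_or; apply/andP; split.
    by apply/negP => /(far_comp_far x0R); rewrite inE eqxx andbF.
  by apply/negP => /(comp_border_adj x0R); rewrite irr_e.
have [s sfar ssimp] := IH (D :|: M) b z (leq_trans W'W szW) bW zb.
apply: (lift s) => //; move: sfar; rewrite inE => /and3P [].
rewrite inE => /orP [// | sM] sb /negP []; exact: b_dom.
Qed.

End SimplicialVertex.

Lemma cut_vertex_of_bridge (T : finType) (e g : rel T) (u c d a : T) :
  symmetric e -> symmetric g -> (forall p q, e p q -> p != c -> q != c -> g p q) ->
  (forall z, e u z -> (z == c) || (z == d)) -> a != c -> d != c ->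
  connect (del_verts g [set u]) a c -> ~~ connect (del_verts g [set u]) d c ->
  cutset e [set c].
Proof.
move=> sym_e gsym ge u_nbrs ac dc conn_ac nconn_dc.
set f := del_verts g [set u]; have cs := sym_connect_sym (del_verts_sym [set u] gsym).
apply: (separated_cutset (p := a) (q := d) sym_e); rewrite ?inE //.
suff inv w : connect (del_verts e [set c]) a w -> connect f w c && (w != c).
  by apply/negP => /inv; rewrite (negbTE nconn_dc).
move: w; apply: (connect_ind (P := fun w => connect f w c && (w != c))).
  by rewrite conn_ac.
move=> z w /andP [zc znc] /and3P [ezw _]; rewrite !inE => wnc; rewrite wnc andbT.
have zu : z != u by apply: contraNneq znc => zu; rewrite (connect_del_verts_in _ zc) // zu inE.
have wu : w != u.
  apply: contraNneq nconn_dc => wu; move: ezw; rewrite wu sym_e => /u_nbrs.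
  by case/orP => /eqP zcd; [rewrite zcd eqxx in znc | rewrite -zcd].
by apply: connect_trans zc; rewrite cs connect1 // /del_verts /= !inE zu wu ge.
Qed.

Section EdgeDeletion.

Variables (T : finType) (e : rel T) (x y : T).
Implicit Type S : {set T}.
Hypotheses (sym_e : symmetric e) (irr_e : irreflexive e).

Local Notation e1 := (del_edge e x y).
Local Notation f1 S := (del_verts (del_edge e x y) S).

Lemma del_edge_del_verts_sym S : connect_sym (f1 S).
Proof. exact/sym_connect_sym/del_verts_sym/del_edge_sym. Qed.

Lemma del_edge_del_verts_edge S p q : e p q -> p \notin S -> q \notin S ->
  ~~ ((p == x) && (q == y) || (p == y) && (q == x)) -> f1 S p q.
Proof. by move=> epq pS qS nxy; rewrite /del_verts /del_edge /= epq nxy pS qS. Qed.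

Lemma omega_del_edge_joined S :
  (x \in S) || (y \in S) || connect (f1 S) x y -> omega e1 S = omega e S.
Proof.
move=> joined; apply: eq_n_comp => p q; apply/idP/idP; apply: connect_sub => {p q} p q.
  move=> /and3P [/andP [epq _] pS qS].
  by rewrite connect1 // /del_verts /= epq pS qS.
move=> /and3P [epq pS qS].
case: (boolP ((p == x) && (q == y) || (p == y) && (q == x))) => [pq_xy | ?]; last first.
  by rewrite connect1 // del_edge_del_verts_edge.
move: joined; case/orP: pq_xy => /andP [/eqP -> /eqP ->] in pS qS *.
  by rewrite (negbTE pS) (negbTE qS).
by rewrite (negbTE pS) (negbTE qS) /= del_edge_del_verts_sym.
Qed.

Lemma common_nbr_in_cut S z : x \notin S -> y \notin S -> ~~ connect (f1 S) x y ->
  e z x -> e z y -> z \in S.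
Proof.
move=> xS yS nxy ezx ezy; apply: contraNT nxy => zS.
have zx : z != x by apply: contraTneq ezx => ->; rewrite irr_e.
have zy : z != y by apply: contraTneq ezy => ->; rewrite irr_e.
apply: (@connect_trans _ _ z); apply: connect1; apply: del_edge_del_verts_edge => //;
  by rewrite 1?sym_e // (negbTE zx) (negbTE zy) ?andbF.
Qed.

Section MergeAtVertex.

Variables (S : {set T}) (u : T).
Hypothesis uS : u \in S.
Hypothesis u_nbrs : forall z, e u z -> z \notin S -> (z == x) || (z == y).

Let K z := [|| z == u, connect (f1 S) z x | connect (f1 S) z y].

Lemma connect_del_vertex_merge p q : p \notin S ->
  connect (del_verts e (S :\ u)) p q -> connect (f1 S) p q || K p && K q.
Proof.
have cs := del_edge_del_verts_sym S.
have Kxy v : (v == x) || (v == y) -> K v by case/orP => /eqP ->; rewrite /K connect0 ?orbT.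
have Kp v : connect (f1 S) p v || K p && K v -> (v == x) || (v == y) -> K p.
  by case/orP => [pv | /andP [//]] /orP [] /eqP vxy; rewrite vxy in pv; rewrite /K pv ?orbT.
move=> pS; apply: (connect_ind (P := fun q => connect (f1 S) p q || K p && K q)).
  by rewrite connect0.
move=> z w Pz /and3P [ezw zS wS]; rewrite !in_setD1 !negb_and !negbK in zS wS.
have [zu | zu] := eqVneq z u.
  subst z; have wu : w != u by apply: contraTneq ezw => ->; rewrite irr_e.
  have pu : ~~ connect (f1 S) p u.
    by apply: contraNN pS; rewrite cs => /(connect_del_verts_in uS) ->.
  rewrite (negbTE pu) /= in Pz; case/andP: Pz => -> _; rewrite Kxy ?orbT // u_nbrs //.
  by move: wS; rewrite (negbTE wu).
rewrite (negbTE zu) /= in zS.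
have [wu | wu] := eqVneq w u.
  by subst w; rewrite (Kp z Pz) ?u_nbrs 1?sym_e // /K eqxx orbT.
rewrite (negbTE wu) /= in wS.
case: (boolP ((z == x) && (w == y) || (z == y) && (w == x))) => [zw_xy | nzw_xy].
  have [zxy wxy] : ((z == x) || (z == y)) /\ ((w == x) || (w == y)).
    by case/orP: zw_xy => /andP [-> ->]; rewrite ?orbT.
  by rewrite (Kp z) // Kxy // orbT.
have f1zw : f1 S z w by apply: del_edge_del_verts_edge.
case/orP: Pz => [pz | /andP [Kpp Kz]]; first by rewrite (connect_trans pz (connect1 f1zw)).
have f1wz : f1 S w z by rewrite (del_verts_sym _ (del_edge_sym x y sym_e)).
move: Kz; rewrite Kpp /K (negbTE zu) /= => /orP [] zxy;
  by rewrite (connect_trans (connect1 f1wz) zxy) ?orbT.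
Qed.

Lemma omega_del_edge_merge : omega e1 S <= (omega e (S :\ u)).+1.
Proof.
have cs := del_edge_del_verts_sym S.
set R1 := [set r | roots (f1 S) r & r \in ~: S].
pose A := R1 :\ fingraph.root (f1 S) x.
have -> : omega e1 S = #|R1| by rewrite /omega n_comp_roots.
apply: leq_trans (_ : #|A| + 1 <= _).
  by rewrite (cardsD1 (fingraph.root (f1 S) x) R1) addnC leq_add2l leq_b1.
rewrite addn1 ltnS; apply: leq_card_n_comp => //.
  by apply/subsetP => r; rewrite !inE => /and3P [_ _ rS]; rewrite negb_and rS orbT.
have not_x r : r \in A -> ~~ connect (f1 S) r x.
  rewrite !inE => /andP [rx /andP [/eqP rr _]]; apply: contra rx => /(fingraph.rootP cs).
  by rewrite rr => ->.
have to_y r : r \in A -> K r -> connect (f1 S) r y.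
  move=> rA; have := rA; rewrite !inE => /and3P [_ _ rS].
  by rewrite /K (negbTE (not_x r rA)) /= => /orP [/eqP ru | //]; move: rS; rewrite ru uS.
move=> r r' rA r'A rr'; have := rA; rewrite !inE => /and3P [_ rroot rS].
have := r'A; rewrite !inE => /and3P [_ r'root _].
apply: (roots_connect_eq cs rroot r'root).
case/orP: (connect_del_vertex_merge rS rr') => // /andP [/(to_y r rA) ry /(to_y r' r'A) r'y].
by rewrite (connect_trans ry) // cs.
Qed.

End MergeAtVertex.

Lemma connect_del_edge_end S a : x \notin S -> y \notin S -> a \notin S ->
  ~~ connect (f1 S) x y -> omega e1 S <= 2 -> connect (f1 S) a x || connect (f1 S) a y.
Proof.
move=> xS yS aS nxy; apply: contraTT; rewrite negb_or -ltnNge => /andP [nax nay].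
have cs := del_edge_del_verts_sym S.
have [ax ay xy] : [/\ a != x, a != y & x != y].
  by split; [apply: contraNneq nax | apply: contraNneq nay | apply: contraNneq nxy] => ->.
have <- : #|[set a; x; y]| = 3 by rewrite -setUA cardsU1 cards2 !inE negb_or ax ay xy.
apply: leq_card_n_comp; first exact: del_edge_sym.
  by rewrite !subUset !sub1set !inE xS yS aS.
move=> p q; rewrite !inE -!orbA => /or3P [] /eqP -> /or3P [] /eqP -> //;
  by rewrite ?(cs _ a) ?(cs y x) ?(negbTE nax) ?(negbTE nay) ?(negbTE nxy).
Qed.

Lemma del_edge_cut_vertex u a : (forall z, e u z -> (z == x) || (z == y)) ->
  u != x -> u != y -> a != u -> a != x -> a != y ->
  ~~ connect (f1 [set u]) x y -> omega e1 [set u] <= 2 -> cutset e [set x] \/ cutset e [set y].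
Proof.
move=> u_nbrs ux uy au ax ay nxy omega2.
have notin_u v : v != u -> v \notin [set u] by rewrite inE.
have cs := del_edge_del_verts_sym [set u].
have [xu yu] : x != u /\ y != u by rewrite !(eq_sym _ u).
have xy : x != y by apply: contraNneq nxy => ->.
have sym_e1 := del_edge_sym x y sym_e.
have := connect_del_edge_end (notin_u _ xu) (notin_u _ yu) (notin_u _ au) nxy omega2.
case/orP => [ax_conn | ay_conn].
  left; apply: (cut_vertex_of_bridge sym_e sym_e1 _ u_nbrs ax _ ax_conn); rewrite 1?cs 1?eq_sym //.
  by move=> p q epq px qx; rewrite /del_edge /= epq (negbTE px) (negbTE qx) andbF.
have y_nbrs z : e u z -> (z == y) || (z == x) by move=> /u_nbrs; rewrite orbC.
right; apply: (cut_vertex_of_bridge sym_e sym_e1 _ y_nbrs ay _ ay_conn) => //.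
by move=> p q epq py qy; rewrite /del_edge /= epq (negbTE py) (negbTE qy) !andbF.
Qed.

End EdgeDeletion.

Local Open Scope ring_scope.

Section Toughness.

Variables (T : finType) (e : rel T).
Hypotheses (sym_e : symmetric e) (irr_e : irreflexive e).
Implicit Type S : {set T}.

Lemma complete_no_cutset S : (forall p q, p != q -> e p q) -> ~~ cutset e S.
Proof.
move=> complete; rewrite /cutset /omega n_comp_roots -leqNgt; apply/card_le1_eqP.
move=> r r'; rewrite !inE => /andP [rr rS] /andP [rr' r'S].
have [// | /complete err'] := eqVneq r' r.
apply: (roots_connect_eq (sym_connect_sym (del_verts_sym S sym_e)) rr' rr).
by apply: connect1; rewrite /del_verts /= err' rS r'S.
Qed.

Lemma toughness_is_not_complete t :
  toughness_is e t -> exists p q, p != q /\ ~~ e p q.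
Proof.
move=> [_ tmax]; case: (boolP [exists p, exists q, (p != q) && ~~ e p q]).
  by move=> /existsP [p /existsP [q /andP [pq npq]]]; exists p, q.
move=> /existsPn complete; exfalso.
have {}complete p q : p != q -> e p q.
  by move=> pq; move/existsPn/(_ q): (complete p); rewrite pq negbK.
apply: (tmax (t + 1)); first by rewrite ltrDl.
by move=> S cS; move: (complete_no_cutset S complete); rewrite cS.
Qed.

Lemma tough_cutset_card_gt1 t S : 1 / 2 < t -> tough e t -> cutset e S -> (1 < #|S|)%N.
Proof.
move=> ht tough_t cS; have := tough_t S cS.
have omega2 : 2%:R <= (omega e S)%:R :> rat by rewrite ler_nat.
have : t * 2%:R <= t * (omega e S)%:R by rewrite ler_wpM2l // ?ltW // (lt_trans _ ht).
rewrite -(ltr_nat rat); lra.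
Qed.

Lemma tough_nbrs_card_gt1 t u a : 1 / 2 < t -> tough e t -> a != u -> ~~ e u a ->
  (1 < #|[set z | e u z]|)%N.
Proof.
move=> ht tough_t au nua; apply: (tough_cutset_card_gt1 ht tough_t).
apply: (separated_cutset (p := u) (q := a) sym_e); rewrite ?inE ?irr_e //.
apply: contra_neqN au => /connect_from_isolated -> // w.
by rewrite /del_verts /= !inE andbCA andbN andbF.
Qed.

Lemma tough_del_vertex_cut t S u n : 0 <= t <= 1 -> tough e t -> u \in S ->
  (2 < n <= (omega e (S :\ u)).+1)%N -> t * n%:R <= #|S|%:R.
Proof.
move=> /andP [t0 t1] tough_t uS /andP [n3 n_le].
have := tough_t (S :\ u) (leq_trans n3 n_le); rewrite (cardsD1 u S) uS add1n -natr1.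
have : t * n%:R <= t * (omega e (S :\ u)).+1%:R by rewrite ler_wpM2l // ler_nat.
rewrite -natr1 mulrDr mulr1; lra.
Qed.

End Toughness.

Lemma tough_del_simplicial_edge (T : finType) (e : rel T) (t : rat) (u a x y : T) :
  symmetric e -> irreflexive e -> 1 / 2 < t <= 1 -> tough e t -> simplicial_in e [set: T] u ->
  e u x -> e u y -> x != y -> a != u -> ~~ e u a -> tough (del_edge e x y) t.
Proof.
move=> sym_e irr_e /andP [t_gt t_le] tough_t simp eux euy xy au nua S cS.
rewrite leNgt; apply/negP => viol.
have [joined | ] := boolP ((x \in S) || (y \in S) || connect (del_verts (del_edge e x y) S) x y).
  rewrite /cutset omega_del_edge_joined // in cS viol.
  by rewrite ltNge tough_t in viol.
rewrite !negb_or => /andP [/andP [xS yS] nxy].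
have in_cut z : e z x -> e z y -> z \in S by apply: common_nbr_in_cut.
have uS : u \in S by apply: in_cut.
have u_nbrs z : e u z -> z \notin S -> (z == x) || (z == y).
  move=> euz; apply: contraNT; rewrite negb_or => /andP [zx zy].
  by apply: in_cut; apply: simp; rewrite ?in_setT.
have merge := omega_del_edge_merge sym_e irr_e uS u_nbrs.
case: (ltnP 2 (omega (del_edge e x y) S)) => [omega3 | omega2].
  have t_range : 0 <= t <= 1 by rewrite t_le andbT; apply: ltW; apply: lt_trans t_gt.
  have := tough_del_vertex_cut t_range tough_t uS (n := omega (del_edge e x y) S).
  by rewrite omega3 merge leNgt viol => /(_ isT).
have S1 : (#|S| <= 1)%N.
  rewrite -ltnS -(ltr_nat rat); apply: (lt_le_trans viol).
  have : (omega (del_edge e x y) S)%:R <= 2%:R :> rat by rewrite ler_nat.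
  have : 0 <= (omega (del_edge e x y) S)%:R :> rat by [].
  nra.
have S_u : S = [set u] by apply/eqP; rewrite eq_sym eqEcard sub1set uS cards1.
rewrite S_u in nxy omega2.
have u_nbrs' z : e u z -> (z == x) || (z == y).
  by move=> euz; apply: u_nbrs; rewrite // S_u inE; apply: contraTneq euz => ->; rewrite irr_e.
have neq_of_adj v w : e u v -> ~~ e u w -> w != v by move=> euv; apply: contraNneq => ->.
have [ux uy] : u != x /\ u != y by split; apply: neq_of_adj; rewrite // irr_e.
have one_cut c : ~ cutset e [set c].
  by move=> /(tough_cutset_card_gt1 t_gt tough_t); rewrite cards1.
by case: (del_edge_cut_vertex sym_e u_nbrs' ux uy au (neq_of_adj _ _ eux nua)
  (neq_of_adj _ _ euy nua) nxy omega2) => /one_cut.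
Qed.

Theorem mainTheorem2 (t : rat) (ht : 1 / 2 < t <= 1)
  (T : finType) (e : rel T) (esym : symmetric e) (eirr : irreflexive e) :
  chordal e -> ~ minimally_tough e t.
Proof.
move=> chord [[tough_t tmax] minimal]; have /andP [t_gt _] := ht.
have [a [x0 [ax0 nax0]]] := toughness_is_not_complete esym (conj tough_t tmax).
have x0_far : x0 \in far e [set: T] a by rewrite inE in_setT eq_sym ax0.
have [u] := exists_simplicial_far esym eirr chord (in_setT a) x0_far.
rewrite inE eq_sym esym => /and3P [_ au nua] simp.
have /card_gt1P [x [y [eux euy xy]]] := tough_nbrs_card_gt1 esym eirr t_gt tough_t au nua.
rewrite !inE in eux euy.
have exy : e x y by apply: simp; rewrite ?in_setT.
have [t0 [t0_lt [_ t0_max]]] := minimal x y exy.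
exact: (t0_max t t0_lt (tough_del_simplicial_edge esym eirr ht tough_t simp eux euy xy au nua)).
Qed.
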